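(* Let $n\ge 3$, let $K$ be a field, $S_n$ as defined below, and $P=a_1a_2\cdots a_nS_n$. Then: (1) $P$ is a prime ideal of the monoid $S_n$; (2) every prime ideal $Q$ of the algebra $K[S_n]$ with $Q\cap S_n\neq\emptyset$ contains $P$; (3) $K[P]$ is a prime ideal of $K[S_n]$ of height one, i.e. every nonzero prime ideal $P_0$ of $K[S_n]$ with $P_0\subseteq K[P]$ equals $K[P]$.
   Context: For $n\ge 3$, $S_n$ denotes the monoid with generators $a_1,\dots,a_n$ and defining relations $a_1a_2\cdots a_n=a_{\sigma(1)}a_{\sigma(2)}\cdots a_{\sigma(n)}$ for all $\sigma$ in the cyclic subgroup of $\operatorname{Sym}_n$ generated by the cycle $(1,2,\dots,n)$. An ideal $P\neq S$ of a monoid $S$ is prime if $aSb\subseteq P$ with $a,b\in S$ implies $a\in P$ or $b\in P$. For an ideal $I$ of $S_n$, $K[I]$ denotes the $K$-linear span of $I$ in $K[S_n]$. *)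

From HB Require Import structures.
From mathcomp Require Import all_boot all_order all_algebra.
From Stdlib Require Import Relation_Operators ClassicalEpsilon.
Set Implicit Arguments. Unset Strict Implicit. Unset Printing Implicit Defensive.
Import GRing.Theory.
Local Open Scope ring_scope.

(* Words in the generators a_1..a_n; generator a_(i+1) is the letter i : 'I_n.
   S_n is the free monoid modulo the congruence [sn_eq n]. *)
Definition word (n : nat) := seq 'I_n.

Definition base (n : nat) : word n := enum 'I_n.

(* one elementary use of a defining relation inside a word:
   rot k (base n) = a_{sigma(1)}...a_{sigma(n)} with sigma = (1 2 ... n)^k *)
Definition sn_step (n : nat) (u v : word n) : Prop :=
  exists (x y : word n) (k : nat),
    u = x ++ rot k (base n) ++ y /\ v = x ++ base n ++ y.

Definition sn_eq (n : nat) : word n -> word n -> Prop :=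
  clos_refl_sym_trans (word n) (@sn_step n).

(* subsets of S_n are predicates on words invariant under sn_eq *)
Definition mon_ideal (n : nat) (I : word n -> Prop) : Prop :=
  [/\ (forall u v, @sn_eq n u v -> I u -> I v),
      (exists u, I u) &
      (forall u s, I u -> I (s ++ u) /\ I (u ++ s))].

Definition mon_prime (n : nat) (I : word n -> Prop) : Prop :=
  [/\ mon_ideal I,
      (exists w, ~ I w) &
      (forall a b : word n, (forall s, I (a ++ s ++ b)) -> I a \/ I b)].

Definition Pideal (n : nat) (w : word n) : Prop :=
  exists s : word n, @sn_eq n w (base n ++ s).

Definition pb (P : Prop) : bool :=
  if excluded_middle_informative P then true else false.

(* an element of K[S_n] is given by a formal finite K-linear combination of
   words; two such represent the same element iff all coefficients agree *)
Definition kalg (K : fieldType) (n : nat) := seq (K * word n).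

Definition kcoef (K : fieldType) (n : nat) (p : kalg K n) (x : word n) : K :=
  \sum_(cw <- p | pb (@sn_eq n cw.2 x)) cw.1.

Definition keq (K : fieldType) (n : nat) (p q : kalg K n) : Prop :=
  forall x, kcoef p x = kcoef q x.

Definition kzero (K : fieldType) (n : nat) : kalg K n := [::].
Definition kadd (K : fieldType) (n : nat) (p q : kalg K n) : kalg K n := p ++ q.
Definition kmul (K : fieldType) (n : nat) (p q : kalg K n) : kalg K n :=
  [seq (a.1 * b.1, a.2 ++ b.2) | a <- p, b <- q].
Definition kword (K : fieldType) (n : nat) (w : word n) : kalg K n := [:: (1, w)].

(* two-sided ideal of K[S_n] (as a predicate compatible with equality in K[S_n]);
   K-linearity follows from closure under multiplication by scalars c*1 *)
Definition alg_ideal (K : fieldType) (n : nat) (I : kalg K n -> Prop) : Prop :=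
  [/\ (forall p q, keq p q -> I p -> I q),
      I (kzero K n),
      (forall p q, I p -> I q -> I (kadd p q)) &
      (forall p r, I p -> I (kmul r p) /\ I (kmul p r))].

Definition alg_prime (K : fieldType) (n : nat) (I : kalg K n -> Prop) : Prop :=
  [/\ alg_ideal I,
      (exists p, ~ I p) &
      (forall a b, (forall r, I (kmul (kmul a r) b)) -> I a \/ I b)].

Definition kspan (K : fieldType) (n : nat) (I : word n -> Prop) (p : kalg K n) : Prop :=
  exists q : kalg K n, keq p q /\ (forall c w, (c, w) \in q -> I w).

From HB Require Import structures.
From mathcomp Require Import all_boot all_order all_algebra.
From Stdlib Require Import Relation_Operators Classical ClassicalEpsilon.

Set Implicit Arguments. Unset Strict Implicit. Unset Printing Implicit Defensive.
Import GRing.Theory.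

(* The relations are homogeneous and z is central, since
   c z = z c for every letter c.  A relation can only be applied to a word
   containing a cyclic shift of z as a factor, so P is exactly the set of
   words with such a factor and every word outside P is alone in its class.
   For n >= 3 two words a, b outside P can be joined as a c c b, for a
   suitable letter c, without creating a cyclic factor; this is (1).

   Equality in K[S_n] is tested by linear forms klin F induced
   by class functions F; grouping the terms of such a form by classes yields
   formulas for coefficients of products.  (2): a prime ideal containing a
   word w contains z^|w|, hence z since z is central, hence z S_n.
   (3): K[P] is spanned by the words of P; if a, b lie outside K[P], take
   longest words u0, v0 outside P with nonzero coefficients in a, b and s
   joining them as above: u0 s v0 is outside P and its coefficient in a s b
   is the nonzero product of those coefficients, so a s b is not in K[P].
   Finally K[P] = z K[S_n]; a nonzero prime P0 inside it contains some z L,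
   so contains z or the shorter L, and by descent contains z, hence K[P]. *)

Section Congruence.
Variable n : nat.
Implicit Types u v w p q : word n.

Lemma sn_refl u : sn_eq u u. Proof. exact: rst_refl. Qed.

Lemma sn_sym u v : sn_eq u v -> sn_eq v u. Proof. exact: rst_sym. Qed.

Lemma sn_trans u v w : sn_eq u v -> sn_eq v w -> sn_eq u w.
Proof. exact: rst_trans. Qed.

Lemma sn_cat p q u v : sn_eq u v -> sn_eq (p ++ u ++ q) (p ++ v ++ q).
Proof.
elim=> {u v} [u v [x [y [k [-> ->]]]] | u | u v _ IH | u v w _ IH1 _ IH2].
- by apply: rst_step; exists (p ++ x), (y ++ q), k; rewrite !catA.
- exact: sn_refl.
- exact: sn_sym.
- exact: sn_trans IH1 IH2.
Qed.

Lemma sn_catl p u v : sn_eq u v -> sn_eq (p ++ u) (p ++ v).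
Proof. by move=> /(sn_cat p [::]); rewrite !cats0. Qed.

Lemma sn_catr q u v : sn_eq u v -> sn_eq (u ++ q) (v ++ q).
Proof. exact: sn_cat [::] q u v. Qed.

(* The defining relations are homogeneous, so the length of a word is an
   invariant of the element of S_n it represents. *)
Lemma sn_size u v : sn_eq u v -> size u = size v.
Proof.
elim=> {u v} [u v [x [y [k [-> ->]]]] | | u v _ -> | u v w _ -> _ ->] //.
by rewrite !size_cat [size (drop _ _) + _]addnC -size_cat cat_take_drop.
Qed.

Lemma size_base : size (base n) = n.
Proof. exact: size_enum_ord. Qed.

Lemma sn_rot k : sn_eq (base n) (rot k (base n)).
Proof. by apply: rst_sym; apply: rst_step; exists [::], [::], k; rewrite !cats0. Qed.

End Congruence.

Section Centre.
Variable n : nat.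
Implicit Types u w x : word n.

Lemma rot_base_head (c : 'I_n) :
  rot c (base n) = c :: (drop c.+1 (base n) ++ take c (base n)).
Proof. by rewrite /rot (drop_nth c) ?size_base // nth_ord_enum. Qed.

(* Each letter commutes with z: c z = c (c+1 ... c-1) c = z c. *)
Lemma cons_base (c : 'I_n) : sn_eq (c :: base n) (base n ++ [:: c]).
Proof.
have hc : c < size (base n) by rewrite size_base.
have shift : c :: rot c.+1 (base n) = rot c (base n) ++ [:: c].
  by rewrite /rot (drop_nth c hc) (take_nth c hc) nth_ord_enum -cats1 catA.
apply: (sn_trans (sn_catl [:: c] (sn_rot n c.+1))).
by rewrite /= shift; apply: sn_catr; apply: sn_sym; apply: sn_rot.
Qed.

Lemma base_central x : sn_eq (x ++ base n) (base n ++ x).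
Proof.
elim: x => [|c x IH] /=; first by rewrite cats0; apply: sn_refl.
apply: (sn_trans (sn_catl [:: c] IH)).
by have := sn_catr x (cons_base c); rewrite -catA.
Qed.

Fixpoint zpow m : word n := if m is m'.+1 then zpow m' ++ base n else [::].

Lemma zpow_div w : exists u, sn_eq (zpow (size w)) (w ++ u).
Proof.
elim/last_ind: w => [|w c [u IH]]; first by exists [::]; apply: sn_refl.
rewrite size_rcons /=; exists (drop c.+1 (base n) ++ take c (base n) ++ u).
apply: (sn_trans (sn_catr (base n) IH)); rewrite -catA.
apply: (sn_trans (sn_catl w (base_central u))).
rewrite -cats1 -catA /=; apply: sn_catl.
by rewrite catA -cat_cons -rot_base_head; apply: sn_catr; apply: sn_rot.
Qed.

End Centre.

Section Rigidity.
Variable n : nat.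
Implicit Types u v w s : word n.

Definition has_cyclic_factor w := exists k, infix (rot k (base n)) w.

(* A relation can only be applied to a word with a cyclic factor, and it
   produces such a word: words without cyclic factor are alone in their class. *)
Lemma sn_eq_rigid u v :
  sn_eq u v -> u = v \/ (has_cyclic_factor u /\ has_cyclic_factor v).
Proof.
elim=> {u v} [u v [x [y [k [-> ->]]]] | u | u v _ IH | u v w _ IH1 _ IH2].
- by right; split; [exists k | exists 0]; rewrite ?rot0 infix_infix.
- by left.
- by case: IH => [->|[]]; [left | right].
- case: IH1 => [->|[h1 h2]] //.
  by right; split=> //; case: IH2 => [<-|[]].
Qed.

Lemma Pideal_cyclic w : Pideal w <-> has_cyclic_factor w.
Proof.
split=> [[s /sn_eq_rigid [->|[]//]] | [k /infixP [x [y ->]]]].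
  by exists 0; rewrite rot0 prefix_infix.
exists (x ++ y); apply: (sn_trans (v := x ++ base n ++ y)).
  by apply: rst_step; exists x, y, k.
by rewrite !catA; apply: sn_catr; apply: base_central.
Qed.

Lemma Pideal_sn u v : sn_eq u v -> Pideal u -> Pideal v.
Proof.
move=> /sn_eq_rigid [<- //|[_ hv] _]; exact/Pideal_cyclic.
Qed.

Lemma Pideal_catl s w : Pideal w -> Pideal (s ++ w).
Proof. by move=> /Pideal_cyclic [k hk]; apply/Pideal_cyclic; exists k; apply: infix_catl. Qed.

Lemma Pideal_catr s w : Pideal w -> Pideal (w ++ s).
Proof. by move=> /Pideal_cyclic [k hk]; apply/Pideal_cyclic; exists k; apply: infix_catr. Qed.

Lemma Pideal_size w : Pideal w -> n <= size w.
Proof. by case=> s /sn_size ->; rewrite size_cat size_base leq_addr. Qed.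

Lemma Pideal_nil : 0 < n -> ~ @Pideal n [::].
Proof. by move=> n_pos /Pideal_size; rewrite leqn0 => /eqP n0; rewrite n0 in n_pos. Qed.

Lemma sn_eq_nonP u v : ~ Pideal u -> sn_eq u v -> u = v.
Proof. by move=> hu /sn_eq_rigid [//|[h _]]; case: hu; apply/Pideal_cyclic. Qed.

End Rigidity.

Lemma infix_sorted_cat (T : eqType) (e : rel T) (x0 : T) (s t r : seq T) :
  ~~ e (last x0 s) (head x0 t) -> sorted e r -> infix r (s ++ t) ->
  infix r s || infix r t.
Proof.
move=> junction sorted_r /infixP [x [y E]].
have [left_of|] := leqP (size (x ++ r)) (size s).
  apply/orP; left; apply/infixP; exists x, (drop (size (x ++ r)) s).
  have pre : take (size (x ++ r)) s = x ++ r.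
    by rewrite -(takel_cat t left_of) E catA take_size_cat.
  by rewrite catA -[in LHS](cat_take_drop (size (x ++ r)) s) pre.
rewrite size_cat => cross_end; have [right_of|cross_start] := leqP (size s) (size x).
  apply/orP; right; apply/infixP; exists (drop (size s) x), y.
  rewrite -(drop_size_cat t (erefl (size s))) E drop_cat.
  case: ltngtP right_of => // -> _.
  by rewrite subnn drop0 drop_size.
(* otherwise r contains the two letters around the junction *)
exfalso; move: junction; apply/negP/negPn.
have mid j : j < size r -> nth x0 (x ++ r ++ y) (size x + j) = nth x0 r j.
  by move=> hj; rewrite nth_cat ltnNge leq_addr /= addKn nth_cat hj.
set j := (size s).-1 - size x.
have s_pos : 0 < size s by apply: leq_ltn_trans cross_start.
have hj : size x + j = (size s).-1 by rewrite subnKC // -ltnS prednK.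
have hj1 : j.+1 < size r by rewrite -(ltn_add2l (size x)) addnS hj prednK.
move/sortedP: sorted_r => /(_ x0 j hj1).
rewrite -mid ?(ltn_trans _ hj1) // -mid // addnS hj prednK // -E.
by rewrite !nth_cat ltn_predL s_pos nth_last ltnn subnn nth0.
Qed.

Section PrimeWords.
Variable n : nat.
Implicit Types a b w : word n.

Definition cyc_succ : rel 'I_n := fun c d => d == ordS c.

Lemma path_iota_mod m k :
  m + k < n -> path (fun i j => j == i.+1 %% n) m (iota m.+1 k).
Proof.
elim: k m => [|k IH] m //= hmk.
rewrite IH ?addSnnS // andbT modn_small //.
by apply: leq_ltn_trans hmk; rewrite -addn1 leq_add2l.
Qed.

Lemma cycle_iota_mod : cycle (fun i j => j == i.+1 %% n) (iota 0 n).
Proof.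
have [->|n_pos] := posnP n; first by [].
rewrite -[X in iota 0 X](prednK n_pos) /= rcons_path path_iota_mod ?prednK //=.
have last_iota k m : last k (iota k.+1 m) = k + m.
  by elim: m k => [|m IH] k /=; rewrite ?addn0 // IH addSnnS.
by rewrite last_iota prednK // modnn.
Qed.

Lemma sorted_rot_base k : sorted cyc_succ (rot k (base n)).
Proof.
have : cycle cyc_succ (rot k (base n)).
  rewrite rot_cycle (@eq_cycle _ _ (relpre val (fun i j => j == i.+1 %% n))) //.
  by rewrite -cycle_map val_enum_ord cycle_iota_mod.
by case: (rot k _) => //= c r; rewrite rcons_path => /andP [].
Qed.

Lemma ordS_neq (c : 'I_n) : 1 < n -> c != ordS c.
Proof.
move=> n_gt1; apply/eqP => /(congr1 val) /=.
case: (ltngtP c.+1 n) (ltn_ord c) => [lt _| //| eq _].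
  by rewrite modn_small // => /n_Sn.
by rewrite eq modnn => c0; move: eq; rewrite c0 => n1; rewrite -n1 in n_gt1.
Qed.

Lemma exists_separator (l h : 'I_n) : 3 <= n ->
  exists c, [&& ~~ cyc_succ l c, ~~ cyc_succ c c & ~~ cyc_succ c h].
Proof.
move=> n_ge3.
have : 0 < #|~: [set ordS l; ord_pred h]|.
  rewrite cardsCs setCK card_ord cards2 subn_gt0.
  by apply: leq_trans n_ge3; rewrite ltnS; case: (_ != _).
case/card_gt0P => c; rewrite !inE negb_or => /andP [cl ch].
exists c; rewrite /cyc_succ cl ordS_neq ?(leq_trans _ n_ge3) //=.
by apply: contra ch => /eqP ->; rewrite ordSK.
Qed.

(* The key combinatorial fact: two words without cyclic factor can be joined
   by a word (cc) without creating a cyclic factor. *)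
Lemma cyclic_free_cat a b : 3 <= n ->
  ~ has_cyclic_factor a -> ~ has_cyclic_factor b ->
  exists s, ~ has_cyclic_factor (a ++ s ++ b).
Proof.
move=> n_ge3 ha hb.
have not_letter k (c : 'I_n) : ~~ infix (rot k (base n)) [:: c].
  rewrite infixs1 negb_or; apply/andP; split; apply/eqP => /(congr1 size);
  by rewrite size_rot size_base => n_small; move: n_ge3; rewrite n_small.
pose c0 : 'I_n := Ordinal (leq_trans (ltn0Sn 2) n_ge3).
have [c /and3P [lc cc cb]] := exists_separator (last c0 a) (head c0 b) n_ge3.
exists [:: c; c] => -[k hk].
have split_at s t : ~~ cyc_succ (last c0 s) (head c0 t) ->
    infix (rot k (base n)) (s ++ t) ->
    infix (rot k (base n)) s || infix (rot k (base n)) t.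
  by move=> junction; apply: infix_sorted_cat junction (sorted_rot_base k).
move: hk => /(split_at a [:: c, c & b] lc) /orP [ra | ]; first by apply: ha; exists k.
move=> /(split_at [:: c] (c :: b) cc); rewrite (negbTE (not_letter _ _)) /=.
move=> /(split_at [:: c] b cb); rewrite (negbTE (not_letter _ _)) /=.
by move=> rb; apply: hb; exists k.
Qed.

Lemma nonP_cat a b : 3 <= n -> ~ Pideal a -> ~ Pideal b ->
  exists s, ~ Pideal (a ++ s ++ b).
Proof.
move=> n_ge3 ha hb.
have [s hs] := cyclic_free_cat n_ge3
  (fun h => ha (proj2 (Pideal_cyclic a) h)) (fun h => hb (proj2 (Pideal_cyclic b) h)).
by exists s => /Pideal_cyclic.
Qed.

End PrimeWords.

Lemma Pideal_prime n : 3 <= n -> mon_prime (@Pideal n).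
Proof.
move=> n_ge3; split.
- split; first exact: Pideal_sn.
    by exists (base n), [::]; rewrite cats0; apply: sn_refl.
  by move=> u s hu; split; [apply: Pideal_catl | apply: Pideal_catr].
- by exists [::]; apply: Pideal_nil; apply: leq_trans n_ge3.
- move=> a b hab; apply: NNPP => /not_or_and [ha hb].
  by have [s] := nonP_cat n_ge3 ha hb; apply; apply: hab.
Qed.

Local Open Scope ring_scope.

Lemma pbP (P : Prop) : reflect P (pb P).
Proof. by rewrite /pb; case: excluded_middle_informative => h; constructor. Qed.

Section CanonicalWords.
Variable n : nat.
Implicit Types u v w : word n.

Definition canon w : word n := choose (fun v => pb (sn_eq w v)) w.

Lemma canon_sn w : sn_eq w (canon w).
Proof.
have refl : pb (sn_eq w w) by apply/pbP; apply: sn_refl.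
exact/pbP/(@chooseP _ (fun v => pb (sn_eq w v)) w refl).
Qed.

Lemma canon_eq u v : (canon u == canon v) = pb (sn_eq u v).
Proof.
apply/eqP/pbP => [e | huv].
  by apply: sn_trans (canon_sn u) _; rewrite e; apply: sn_sym; apply: canon_sn.
have same_class x : pb (sn_eq u x) = pb (sn_eq v x).
  apply/pbP/pbP => h; first exact: sn_trans (sn_sym huv) h.
  exact: sn_trans huv h.
rewrite /canon (eq_choose same_class); apply: choose_id; apply/pbP.
  exact: sn_sym.
exact: sn_refl.
Qed.

Lemma canon_id w : canon (canon w) = canon w.
Proof. by apply/eqP; rewrite canon_eq; apply/pbP; apply: sn_sym; apply: canon_sn. Qed.

End CanonicalWords.

Section LinearForms.
Variables (K : fieldType) (n : nat).
Implicit Types (p q : kalg K n) (u v w x : word n) (F : word n -> K).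

Definition klin F p : K := \sum_(cw <- p) cw.1 * F cw.2.

Definition sn_inv F := forall u v, sn_eq u v -> F u = F v.

Lemma klin_kword F w : klin F (kword K w) = F w.
Proof. by rewrite /klin big_seq1 mul1r. Qed.

Lemma klin_kmul F p q :
  klin F (kmul p q) = klin (fun u => klin (fun v => F (u ++ v)) q) p.
Proof.
rewrite /klin big_allpairs_dep; apply: eq_bigr => a _ /=.
by rewrite big_distrr; apply: eq_bigr => b _ /=; rewrite -mulrA.
Qed.

Lemma kcoef_canon p x : kcoef p x = \sum_(cw <- p | canon cw.2 == canon x) cw.1.
Proof. by apply: eq_bigl => cw; rewrite canon_eq. Qed.

Lemma kcoef_sn p x y : sn_eq x y -> kcoef p x = kcoef p y.
Proof. by move=> /pbP; rewrite -canon_eq !kcoef_canon => /eqP ->. Qed.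

Lemma kcoef_nz p x : kcoef p x != 0 -> exists2 cw, cw \in p & sn_eq cw.2 x.
Proof.
move=> nz; apply: NNPP => none; move: nz.
rewrite /kcoef big_seq_cond big1 ?eqxx // => cw /andP [hcw /pbP e].
by case: none; exists cw.
Qed.

Lemma klin_classes F p (R : seq (word n)) :
  sn_inv F -> uniq R -> {in R, forall x, canon x = x} ->
  (forall cw, cw \in p -> canon cw.2 \in R) ->
  klin F p = \sum_(x <- R) kcoef p x * F x.
Proof.
move=> hF uR canonR pR.
transitivity (\sum_(cw <- p) \sum_(x <- R | canon cw.2 == x) cw.1 * F x).
  apply: eq_big_seq => cw /pR cwR; rewrite (big_rem _ cwR) eqxx /= big1_seq.
    by rewrite addr0 (hF _ _ (canon_sn cw.2)).
  by move=> x /andP [/eqP <-]; rewrite mem_rem_uniqF.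
rewrite (exchange_big_dep xpredT) //=; apply: eq_big_seq => x xR.
by rewrite -mulr_suml kcoef_canon canonR.
Qed.

Lemma klin_keq F p q : sn_inv F -> keq p q -> klin F p = klin F q.
Proof.
move=> hF pq; pose R := undup [seq canon cw.2 | cw <- p ++ q].
have uR : uniq R by apply: undup_uniq.
have canonR : {in R, forall x, canon x = x}.
  by move=> x; rewrite mem_undup => /mapP [cw _ ->]; apply: canon_id.
have inR (r : kalg K n) : {subset r <= p ++ q} -> forall cw, cw \in r -> canon cw.2 \in R.
  by move=> sub cw /sub hcw; rewrite mem_undup; apply: map_f.
have [sp sq] : {subset p <= p ++ q} /\ {subset q <= p ++ q}.
  by split=> cw hcw; rewrite mem_cat hcw ?orbT.
rewrite (klin_classes hF uR canonR (inR p sp)) (klin_classes hF uR canonR (inR q sq)).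
by apply: eq_bigr => x _; rewrite pq.
Qed.

Definition kind x : word n -> K := fun w => (pb (sn_eq w x))%:R.

Lemma kind_inv x : sn_inv (kind x).
Proof. by move=> u v /pbP; rewrite -canon_eq /kind -!canon_eq => /eqP ->. Qed.

Lemma kcoef_klin p x : kcoef p x = klin (kind x) p.
Proof.
by rewrite /kcoef /klin big_mkcond; apply: eq_bigr => cw _; rewrite /kind; case: pb; rewrite ?mulr1 ?mulr0.
Qed.

Lemma keq_klin p q : (forall F, sn_inv F -> klin F p = klin F q) -> keq p q.
Proof. by move=> h x; rewrite !kcoef_klin; apply: h; apply: kind_inv. Qed.

Lemma klin_single F p x0 : sn_inv F ->
  (forall x, kcoef p x != 0 -> ~ sn_eq x x0 -> F x = 0) ->
  klin F p = kcoef p x0 * F x0.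
Proof.
move=> hF only_x0; pose R := undup (canon x0 :: [seq canon cw.2 | cw <- p]).
have canonR : {in R, forall x, canon x = x}.
  move=> x; rewrite mem_undup inE => /orP [/eqP -> | /mapP [cw _ ->]]; apply: canon_id.
rewrite (klin_classes (R := R)) ?undup_uniq //; last first.
  by move=> cw hcw; rewrite mem_undup inE (map_f (fun c : K * word n => canon c.2)) ?orbT.
have x0R : canon x0 \in R by rewrite mem_undup mem_head.
rewrite (bigD1_seq _ x0R) ?undup_uniq //= big1_seq ?addr0.
  by rewrite (kcoef_sn p (sn_sym (canon_sn x0))) -(hF _ _ (canon_sn x0)).
move=> x /andP [neq xR]; have [-> | nz] := eqVneq (kcoef p x) 0; first by rewrite mul0r.
rewrite only_x0 ?mulr0 // => /pbP; rewrite -canon_eq canonR // => /eqP e.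
by rewrite e eqxx in neq.
Qed.

End LinearForms.

Section Algebra.
Variables (K : fieldType) (n : nat).
Implicit Types (p q r : kalg K n) (u v w : word n).

Local Notation z := (kword K (base n)).

Lemma keq_sym p q : keq p q -> keq q p.
Proof. by move=> h x; rewrite h. Qed.

Lemma keq_trans p q r : keq p q -> keq q r -> keq p r.
Proof. by move=> h1 h2 x; rewrite h1 h2. Qed.

Lemma kmul_kword u v : kmul (kword K u) (kword K v) = kword K (u ++ v).
Proof. by rewrite /kmul /kword /= mulr1. Qed.

Lemma kword_sn u v : sn_eq u v -> keq (kword K u) (kword K v).
Proof. by move=> huv; apply: keq_klin => F hF; rewrite !klin_kword; apply: hF. Qed.

Lemma kmul_keql r p q : keq p q -> keq (kmul r p) (kmul r q).
Proof.
move=> pq; apply: keq_klin => F hF; rewrite !klin_kmul.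
by apply: eq_bigr => cw _; congr (_ * _); apply: klin_keq pq => v v' /(sn_catl cw.2); apply: hF.
Qed.

Lemma kmul_keqr r p q : keq p q -> keq (kmul p r) (kmul q r).
Proof.
move=> pq; apply: keq_klin => F hF; rewrite !klin_kmul; apply: klin_keq pq => u u' huu'.
by apply: eq_bigr => cw _; congr (_ * _); apply: hF; apply: sn_catr.
Qed.

Lemma z_central r q : keq (kmul r (kmul z q)) (kmul (kmul z r) q).
Proof.
apply: keq_klin => F hF; rewrite !klin_kmul klin_kword.
apply: eq_bigr => cw _; rewrite klin_kmul klin_kword; congr (_ * _).
by apply: eq_bigr => cw' _; rewrite !catA; congr (_ * _); apply: hF; apply: sn_catr; apply: base_central.
Qed.

Lemma prime_central Q q : alg_prime Q -> Q (kmul z q) -> Q z \/ Q q.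
Proof.
move=> [[Qkeq _ _ Qmul] _ Qprime] Qzq; apply: Qprime => r.
by apply: Qkeq (z_central r q) _; case: (Qmul _ r Qzq).
Qed.

Lemma prime_meeting_S Q : alg_prime Q -> (exists w, Q (kword K w)) ->
  forall w, Pideal w -> Q (kword K w).
Proof.
move=> primeQ [w Qw]; have [[Qkeq _ _ Qmul] _ _] := primeQ.
have Qsn u v : sn_eq u v -> Q (kword K u) -> Q (kword K v).
  by move=> /kword_sn; apply: Qkeq.
have Qcatr u v : Q (kword K u) -> Q (kword K (u ++ v)).
  by rewrite -kmul_kword => /(Qmul _ (kword K v)) [].
have Qz : Q z.
  have [u /sn_sym hu] := zpow_div w.
  move: (Qsn _ _ hu (Qcatr _ u Qw)); elim: (size w) => [|m IH] /= Qzm.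
    exact: Qcatr [::] _ Qzm.
  have := Qsn _ _ (base_central (zpow n m)) Qzm.
  by rewrite -kmul_kword => /(prime_central primeQ) [| /IH].
by move=> v [s /sn_sym hs]; apply: Qsn hs (Qcatr _ s Qz).
Qed.

End Algebra.

Lemma exists_max_size (T : Type) (f : T -> nat) (P : T -> Prop) (m : nat) :
  (exists x, P x) -> (forall x, P x -> (f x <= m)%N) ->
  exists2 x0, P x0 & forall x, P x -> (f x <= f x0)%N.
Proof.
move=> [x Px] bound; pose S k := pb (exists y, P y /\ f y = k).
have exS : exists k, S k by exists (f x); apply/pbP; exists x.
have boundS k : S k -> (k <= m)%N by move=> /pbP [y [Py <-]]; apply: bound.
case: (ex_maxnP exS boundS) => k /pbP [x0 [Px0 <-]] maxk.
by exists x0 => // y Py; apply: maxk; apply/pbP; exists y.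
Qed.

Lemma cat_eq_lead (T : eqType) (u v u0 v0 m : seq T) :
  u ++ m ++ v = u0 ++ m ++ v0 -> (size u <= size u0)%N -> (size v <= size v0)%N ->
  u = u0 /\ v = v0.
Proof.
move=> E le_u le_v.
have sizes := congr1 size E; rewrite !size_cat in sizes.
have su : size u = size u0.
  apply/eqP; rewrite eqn_leq le_u -(leq_add2r (size m + size v)) sizes.
  by rewrite !leq_add2l.
move/eqP: E; rewrite eqseq_cat // eqseq_cat // => /and3P [/eqP -> _ /eqP ->].
by [].
Qed.

Section SpanP.
Variables (K : fieldType) (n : nat).
Implicit Types (a b p q : kalg K n) (u v w x : word n).

Local Notation KP := (@kspan K n (@Pideal n)).
Local Notation z := (kword K (base n)).

Definition max_size p : nat := \max_(cw <- p) size cw.2.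

Lemma size_le_max p cw : cw \in p -> (size cw.2 <= max_size p)%N.
Proof. by move=> hcw; apply: (@leq_bigmax_seq _ p xpredT (fun c => size c.2) cw hcw). Qed.

Lemma span_ideal : alg_ideal KP.
Proof.
split.
- by move=> p q pq [q' [pq' q'P]]; exists q'; split=> // x; rewrite -pq.
- by exists [::].
- move=> p q [p' [pp' p'P]] [q' [qq' q'P]]; exists (kadd p' q'); split.
    by move=> x; rewrite /kcoef /kadd !big_cat /= -/(kcoef p x) -/(kcoef q x) pp' qq'.
  by move=> c w; rewrite /kadd mem_cat => /orP [/p'P | /q'P].
- move=> p r [q [pq qP]]; split.
  + exists (kmul r q); split; first exact: kmul_keql.
    move=> c w /allpairsP [[cw1 cw2] [/= _ hcw2 [_ ->]]].
    by apply: Pideal_catl; apply: (qP cw2.1); rewrite -surjective_pairing.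
  + exists (kmul q r); split; first exact: kmul_keqr.
    move=> c w /allpairsP [[cw1 cw2] [/= hcw1 _ [_ ->]]].
    by apply: Pideal_catr; apply: (qP cw1.1); rewrite -surjective_pairing.
Qed.

Lemma span_coef p x : KP p -> ~ Pideal x -> kcoef p x = 0.
Proof.
move=> [q [pq qP]] hx; rewrite pq /kcoef big1_seq // => cw /andP [/pbP e hcw].
by case: hx; apply: Pideal_sn e _; apply: (qP cw.1); rewrite -surjective_pairing.
Qed.

Lemma span_of_coef a : (forall x, ~ Pideal x -> kcoef a x = 0) -> KP a.
Proof.
move=> coef0; exists [seq cw <- a | pb (Pideal cw.2)]; split; last first.
  by move=> c w; rewrite mem_filter => /andP [/pbP].
move=> x; rewrite /kcoef big_filter_cond.
case: (classic (Pideal x)) => hx.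
  apply: eq_bigl => cw; case: pbP => e; rewrite ?andbF // andbT.
  by apply/esym/pbP; apply: Pideal_sn (sn_sym e) hx.
rewrite -/(kcoef a x) coef0 // big_pred0 // => cw.
by apply/negbTE/andP => -[/pbP hw /pbP e]; apply: hx (Pideal_sn e hw).
Qed.

(* K[P] is proper: the identity of S_n has coefficient 1 in itself. *)
Lemma span_proper : (0 < n)%N -> exists p, ~ KP p.
Proof.
move=> n_pos; exists (kword K [::]) => inKP.
have := span_coef inKP (Pideal_nil n_pos); rewrite kcoef_klin klin_kword /kind.
by case: pbP => [_ /eqP | []]; [rewrite oner_eq0 | apply: sn_refl].
Qed.

Lemma lead_word a : ~ KP a -> exists u0, [/\ ~ Pideal u0, kcoef a u0 != 0 &
  forall u, ~ Pideal u -> kcoef a u != 0 -> (size u <= size u0)%N].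
Proof.
move=> ha.
have witness : exists u, ~ Pideal u /\ kcoef a u != 0.
  apply: NNPP => none; apply: ha; apply: span_of_coef => x hx.
  by apply/eqP; apply: NNPP => nz; apply: none; exists x; split=> //; apply/negP.
have bounded u : ~ Pideal u /\ kcoef a u != 0 -> (size u <= max_size a)%N.
  by move=> [_ /kcoef_nz [cw hcw /sn_size <-]]; apply: size_le_max.
have [u0 [hu0 au0] u0_max] := exists_max_size witness bounded.
by exists u0; split=> // u hu au; apply: u0_max.
Qed.

Lemma coef_unique_factor a b s u0 v0 :
  let X := u0 ++ s ++ v0 in
  kcoef a u0 != 0 -> kcoef b v0 != 0 ->
  (forall u v, kcoef a u != 0 -> kcoef b v != 0 -> sn_eq (u ++ s ++ v) X ->
     u = u0 /\ v = v0) ->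
  kcoef (kmul (kmul a (kword K s)) b) X = kcoef a u0 * kcoef b v0.
Proof.
move=> X au0 bv0 unique.
pose G u := klin (fun v => kind K X (u ++ s ++ v)) b.
have G_inv : sn_inv G.
  move=> u u' huu'; apply: eq_bigr => cw _.
  by rewrite (kind_inv K X (sn_catr _ huu')).
have G_single u : kcoef a u != 0 -> G u = kcoef b v0 * kind K X (u ++ s ++ v0).
  move=> au; apply: klin_single => [v v' hvv' | y b_y y_v0].
    by apply: kind_inv; have := sn_catl (u ++ s) hvv'; rewrite -!catA.
  rewrite /kind; case: pbP => // e; case: y_v0.
  by rewrite (proj2 (unique _ _ au b_y e)); apply: sn_refl.
have -> : kcoef (kmul (kmul a (kword K s)) b) X = klin G a.
  rewrite kcoef_klin !klin_kmul; apply: eq_bigr => cw _; rewrite klin_kword.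
  by congr (_ * _); apply: eq_bigr => cw' _; rewrite catA.
rewrite (klin_single (x0 := u0)) ?G_single //.
  by rewrite /kind; case: pbP => [_|[]]; [rewrite mulr1 | apply: sn_refl].
move=> x ax x_u0; rewrite G_single // /kind; case: pbP => [e|]; last by rewrite mulr0.
by case: x_u0; rewrite (proj1 (unique _ _ ax bv0 e)); apply: sn_refl.
Qed.

Lemma span_prime a b : (3 <= n)%N ->
  (forall r, KP (kmul (kmul a r) b)) -> KP a \/ KP b.
Proof.
move=> n_ge3 hab; apply: NNPP => /not_or_and [ha hb].
have [u0 [hu0 au0 u0_max]] := lead_word ha.
have [v0 [hv0 bv0 v0_max]] := lead_word hb.
have [s hX] := nonP_cat n_ge3 hu0 hv0.
have unique u v : kcoef a u != 0 -> kcoef b v != 0 ->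
    sn_eq (u ++ s ++ v) (u0 ++ s ++ v0) -> u = u0 /\ v = v0.
  move=> au bv /sn_sym /(sn_eq_nonP hX) E.
  have hu : ~ Pideal u by move=> /(Pideal_catr (s ++ v)); rewrite -E.
  have hv : ~ Pideal v by move=> /(Pideal_catl (u ++ s)); rewrite -catA -E.
  exact: cat_eq_lead (esym E) (u0_max _ hu au) (v0_max _ hv bv).
have := span_coef (hab (kword K s)) hX.
rewrite coef_unique_factor // => /eqP; rewrite mulf_eq0.
by rewrite (negbTE au0) (negbTE bv0).
Qed.

(* Discarding from q the words longer than those of p does not change the
   element, since lengths are invariants of classes. *)
Lemma keq_truncate p q m : keq p q -> (forall cw, cw \in p -> (size cw.2 <= m)%N) ->
  keq p [seq cw <- q | (size cw.2 <= m)%N].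
Proof.
move=> pq p_m x; rewrite pq /kcoef big_filter_cond.
case: (leqP (size x) m) => x_m.
  by apply: eq_bigl => cw; case: pbP => e; rewrite ?andbF // andbT (sn_size e).
rewrite big_pred0 => [|cw]; last first.
  by case: pbP => e; rewrite ?andbF // andbT (sn_size e) leqNgt x_m.
rewrite -/(kcoef q x) -pq /kcoef big1_seq // => cw /andP [/pbP e hcw].
by move: (p_m _ hcw); rewrite (sn_size e) leqNgt x_m.
Qed.

Lemma z_factor q m : (forall cw, cw \in q -> Pideal cw.2 /\ (size cw.2 <= m)%N) ->
  exists L, keq q (kmul z L) /\ (forall cw, cw \in L -> (size cw.2 + n <= m)%N).
Proof.
elim: q => [|[c w] q IH] hq; first by exists [::].
have [[s ws] w_m] := hq _ (mem_head _ _).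
have [L [qL L_m]] : exists L, keq q (kmul z L) /\
    (forall cw, cw \in L -> (size cw.2 + n <= m)%N).
  by apply: IH => cw hcw; apply: hq; rewrite in_cons hcw orbT.
exists ((c, s) :: L); split.
  apply: keq_klin => F hF; rewrite klin_kmul klin_kword /klin !big_cons /=.
  rewrite (hF _ _ ws); congr (_ + _).
  by rewrite -/(klin F q) (klin_keq hF qL) klin_kmul klin_kword.
move=> cw; rewrite in_cons => /orP [/eqP -> /= | /L_m //].
by move: w_m; rewrite (sn_size ws) size_cat size_base addnC.
Qed.

Lemma span_factor p m : KP p -> (forall cw, cw \in p -> (size cw.2 <= m)%N) ->
  exists L, keq p (kmul z L) /\ (forall cw, cw \in L -> (size cw.2 + n <= m)%N).
Proof.
move=> [q [pq qP]] p_m.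
have [|L [qL L_m]] := z_factor (q := [seq cw <- q | (size cw.2 <= m)%N]) (m := m).
  move=> cw; rewrite mem_filter => /andP [cw_m hcw]; split=> //.
  by apply: (qP cw.1); rewrite -surjective_pairing.
by exists L; split=> //; apply: keq_trans (keq_truncate pq p_m) qL.
Qed.

Lemma kmul_z_zero L : keq L (kzero K n) -> keq (kmul z L) (kzero K n).
Proof.
move=> L0; apply: keq_klin => F hF; rewrite klin_kmul klin_kword.
rewrite (klin_keq _ L0) => [|v v' /(sn_catl (base n))]; last exact: hF.
by rewrite /klin !big_nil.
Qed.

(* A nonzero prime ideal inside K[P] contains z: descend along p = z L. *)
Lemma z_in_prime P0 : (0 < n)%N -> alg_prime P0 ->
  (forall p, P0 p -> KP p) -> (exists p, P0 p /\ ~ keq p (kzero K n)) -> P0 z.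
Proof.
move=> n_pos primeP0 sub [p0 [P0p0 nz0]]; have [[P0keq _ _ _] _ _] := primeP0.
suff descent m p : P0 p -> ~ keq p (kzero K n) ->
    (forall cw, cw \in p -> (size cw.2 <= m)%N) -> P0 z.
  apply: (descent (max_size p0) p0) P0p0 nz0 _ => cw; apply: size_le_max.
elim/ltn_ind: m p => m IH p P0p nzp p_m.
have [L [pL L_m]] := span_factor (sub _ P0p) p_m.
have [// | P0L] := prime_central primeP0 (P0keq _ _ pL P0p).
have nzL : ~ keq L (kzero K n).
  by move=> /kmul_z_zero zL0; apply: nzp; apply: keq_trans pL zL0.
have [cw cwL] : exists cw, cw \in L.
  case: L {pL L_m P0L} nzL => [nzL | cw L _]; last by exists cw; apply: mem_head.
  by case: nzL.
apply: (IH (m - n)%N _ L P0L nzL) => [|cw' /L_m cw'_m].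
  have n_m : (n <= m)%N := leq_trans (leq_addl _ _) (L_m _ cwL).
  by rewrite ltn_subrL n_pos (leq_trans n_pos n_m).
by rewrite leq_subRL ?(leq_trans (leq_addl _ _) cw'_m) // addnC.
Qed.

Lemma span_height_one P0 : (0 < n)%N -> alg_prime P0 ->
  (exists p, P0 p /\ ~ keq p (kzero K n)) -> (forall p, P0 p -> KP p) ->
  forall p, P0 p <-> KP p.
Proof.
move=> n_pos primeP0 nz sub p; split; first exact: sub.
have [[P0keq _ _ P0mul] _ _] := primeP0.
move=> /span_factor /(_ (@size_le_max p)) [L [pL _]].
have P0z := z_in_prime n_pos primeP0 sub nz.
by apply: P0keq (keq_sym pL) _; case: (P0mul _ L P0z).
Qed.

End SpanP.

Theorem lemma2p5 (K : fieldType) (n : nat) (hn : (3 <= n)%N) :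
  [/\ mon_prime (@Pideal n),
      (forall Q : kalg K n -> Prop,
         alg_prime Q -> (exists w : word n, Q (@kword K n w)) ->
         forall w, Pideal w -> Q (@kword K n w)) &
      (alg_prime (@kspan K n (@Pideal n)) /\
       forall P0 : kalg K n -> Prop,
         alg_prime P0 ->
         (exists p, P0 p /\ ~ keq p (@kzero K n)) ->
         (forall p, P0 p -> @kspan K n (@Pideal n) p) ->
         forall p, P0 p <-> @kspan K n (@Pideal n) p)].
Proof.
have n_pos : (0 < n)%N by apply: leq_trans hn.
split.
- exact: Pideal_prime.
- exact: prime_meeting_S.
- split; last by move=> P0; apply: span_height_one.
  split; [exact: span_ideal | exact: span_proper | move=> a b; exact: span_prime].
Qed.
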